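(* Let $d\geq1$, $q>1$, $\frac dq<\alpha<d$ and $\delta>0$. Then there exists $C>0$ such that for every $R>0$ and every measurable function $u$ on $\mathbb{R}^d$, $$\int_{\mathbb{R}^d\setminus B_R(0)}\frac{|u(x)|}{|x|^{\alpha-\frac dq+\delta}}\,dx\leq \frac{C}{R^\delta}\left\|\tfrac{1}{|x|^\alpha}\star|u|\right\|_{L^q(\mathbb{R}^d)}$$ and $$\int_{B_R(0)}\frac{|u(x)|}{|x|^{\alpha-\frac dq-\delta}}\,dx\leq C R^{\delta}\left\|\tfrac{1}{|x|^\alpha}\star|u|\right\|_{L^q(\mathbb{R}^d)}.$$
   Context: $B_R(0)$ is the open ball of radius $R$ centered at the origin and $\star$ denotes convolution. *)

From HB Require Import structures.
From mathcomp Require Import all_boot all_order all_algebra.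
From mathcomp Require Import all_classical all_reals all_analysis.
Set Implicit Arguments. Unset Strict Implicit. Unset Printing Implicit Defensive.
Import Order.TTheory GRing.Theory Num.Theory.
Local Open Scope ring_scope.

(* R^d is modelled as d.-tuple R, with the product (= Borel) sigma-algebra
   provided by MathComp-Analysis (measure_tuple_display). *)

Definition enorm (R : realType) (d : nat) (x : d.-tuple R) : R :=
  Num.sqrt (\sum_(i < d) tnth x i ^+ 2).

Definition tsub (R : realType) (d : nat) (x y : d.-tuple R) : d.-tuple R :=
  [tuple tnth x i - tnth y i | i < d].

(* Lebesgue integral over R^d of a NONNEGATIVE measurable function, written as
   the iterated one-dimensional Lebesgue integral (equal to the integral
   against d-dimensional Lebesgue measure by Tonelli's theorem). *)
Fixpoint lebint (R : realType) (d : nat) : (d.-tuple R -> \bar R) -> \bar R :=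
  match d return (d.-tuple R -> \bar R) -> \bar R with
  | 0 => fun f => f [tuple]
  | d'.+1 => fun f =>
      (\int[@lebesgue_measure R]_x lebint (fun t : d'.-tuple R => f (cons_tuple x t)))%E
  end.

Definition riesz_conv (R : realType) (d : nat) (alpha : R)
    (u : d.-tuple R -> R) (x : d.-tuple R) : \bar R :=
  lebint (fun y => (`|u y| / (enorm (tsub x y) `^ alpha))%:E).

Definition Lqnorm (R : realType) (d : nat) (q : R) (f : d.-tuple R -> \bar R) : \bar R :=
  ((lebint (fun x => (f x `^ q)%E)) `^ (q^-1))%E.

(* Write I = |x|^-alpha ⋆ |u| and P = \int I^q.
   If |y| >= t and |x| <= t/2 then |x - y| <= 2|y|, so on the cube [0, t/(2d)]^d
   I >= 2^-alpha \int_{|y|>=t} |u(y)|/|y|^alpha, and integrating I^q over that cube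
   gives \int_{|y|>=t} |u(y)|/|y|^alpha <= C P^(1/q) t^(-d/q). Likewise
   I >= (4dt)^-alpha \int_{|y|<t} |u| on [t, 2t]^d, whence
   \int_{|y|<t} |u| <= C P^(1/q) t^(alpha - d/q). Cutting {|x| >= R} and {|x| < R}
   into dyadic shells, on which |x|^(d/q - delta) and |x|^(d/q + delta - alpha) are
   comparable to their values at the inner radius, and applying these two bounds
   shell by shell yields geometric series of ratio 2^-delta. *)

From HB Require Import structures.
From mathcomp Require Import all_boot all_order all_algebra.
From mathcomp Require Import all_classical all_reals all_analysis.
From mathcomp Require Import measurable_realfun ring lra.
Import Order.TTheory GRing.Theory Num.Theory.
Local Open Scope ring_scope.

Section lebint.
Context {R : realType}.
Local Notation mu := (@lebesgue_measure R).
Local Open Scope ereal_scope.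

(* No measurability is needed: the sets of simple functions below f and g defining
   the two integrals are nested. *)
Lemma ge0_le_integralT (f g : R -> \bar R) : (forall x, 0 <= f x) ->
  (forall x, f x <= g x) -> \int[mu]_x f x <= \int[mu]_x g x.
Proof.
move=> f0 fg; have g0 x : 0 <= g x := le_trans (f0 x) (fg x).
rewrite (ge0_integralTE mu f0) (ge0_integralTE mu g0).
apply: ge_ereal_sup => _ [h hf <-]; apply: ereal_sup_ubound.
by exists h => // x; exact: le_trans (hf x) (fg x).
Qed.

Lemma lebint_ge0 [n] [f : n.-tuple R -> \bar R] : (forall x, 0 <= f x) -> 0 <= lebint f.
Proof.
elim: n f => [|n IH] f f0 /=; first exact: f0.
by apply: integral_ge0 => x _; apply: IH.
Qed.

Lemma le_lebint n (f g : n.-tuple R -> \bar R) : (forall x, 0 <= f x) ->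
  (forall x, f x <= g x) -> lebint f <= lebint g.
Proof.
elim: n f g => [|n IH] f g f0 fg /=; first exact: fg.
by apply: ge0_le_integralT => x; [apply: lebint_ge0 | apply: IH].
Qed.

Lemma measurable_lebint n {dX} (X : measurableType dX) (F : X -> n.-tuple R -> \bar R) :
  measurable_fun setT (fun p : X * n.-tuple R => F p.1 p.2) ->
  (forall x t, 0 <= F x t) -> measurable_fun setT (fun x => lebint (F x)).
Proof.
elim: n dX X F => [|n IH] dX X F mF F0 /=.
  apply: (measurableT_comp (f := fun p : X * 0.-tuple R => F p.1 p.2)
    (g := fun x => (x, [tuple])) mF).
  exact: measurable_fun_pair.
pose G (p : X * R) (t : n.-tuple R) := F p.1 (cons_tuple p.2 t).
have mG : measurable_fun setT (fun p : (X * R) * n.-tuple R => G p.1 p.2).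
  apply: (measurableT_comp (f := fun p : X * n.+1.-tuple R => F p.1 p.2)
    (g := fun p : (X * R) * n.-tuple R => (p.1.1, cons_tuple p.1.2 p.2)) mF).
  apply: measurable_fun_pair; first exact: (measurableT_comp (f := fst)).
  apply: measurable_cons; last exact: measurable_snd.
  exact: (measurableT_comp (f := snd) (g := fst)).
have mH := IH _ _ G mG (fun _ _ => F0 _ _).
have H0 p : 0 <= lebint (G p) by apply: lebint_ge0 => t; exact: F0.
exact: (@measurable_fun_fubini_tonelli_F _ _ X _ R mu _ mH H0).
Qed.

Lemma measurable_lebint_cons n (f : n.+1.-tuple R -> \bar R) :
  measurable_fun setT f -> (forall x, 0 <= f x) ->
  measurable_fun setT (fun x : R => lebint (fun t : n.-tuple R => f (cons_tuple x t))).
Proof.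
move=> mf f0; apply: (@measurable_lebint n _ R (fun x t => f (cons_tuple x t))) => //.
by apply: (measurableT_comp mf); exact: measurable_cons.
Qed.

Lemma measurable_cons_tuple_fun n (f : n.+1.-tuple R -> \bar R) (x : R) :
  measurable_fun setT f -> measurable_fun setT (fun t : n.-tuple R => f (cons_tuple x t)).
Proof. by move=> mf; apply: (measurableT_comp mf); exact: measurable_cons. Qed.

Lemma lebintZl n (k : \bar R) (f : n.-tuple R -> \bar R) : 0 <= k ->
  measurable_fun setT f -> (forall x, 0 <= f x) ->
  lebint (fun x => k * f x) = k * lebint f.
Proof.
elim: n f => [|n IH] f k0 mf f0 //=.
rewrite -ge0_integralZl//; last first.
- by move=> x _; apply: lebint_ge0.
- exact: measurable_lebint_cons.
by apply: eq_integral => x _; rewrite IH//; exact: measurable_cons_tuple_fun.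
Qed.

Lemma lebint_nneseries n (f : nat -> n.-tuple R -> \bar R) :
  (forall k, measurable_fun setT (f k)) -> (forall k x, 0 <= f k x) ->
  lebint (fun x => \sum_(k <oo) f k x) = \sum_(k <oo) lebint (f k).
Proof.
elim: n f => [|n IH] f mf f0 //=.
rewrite -integral_nneseries//; last first.
- by move=> k x _; apply: lebint_ge0.
- by move=> k; apply: measurable_lebint_cons.
by apply: eq_integral => x _; rewrite IH// => k; exact: measurable_cons_tuple_fun.
Qed.

Lemma lebint0 n : lebint (fun _ : n.-tuple R => 0) = 0.
Proof.
elim: n => [|n IH] //=.
under eq_integral => y _ do rewrite IH.
exact: integral0.
Qed.

Definition cube {n} (a b : R) (x : n.-tuple R) := all (fun z => (a <= z <= b)%R) x.

Lemma lebint_cube n (a b : R) (c : \bar R) : (a <= b)%R -> 0 <= c ->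
  lebint (fun x : n.-tuple R => if cube a b x then c else 0) = c * ((b - a) ^+ n)%:E.
Proof.
move=> ab c0; elim: n => [|n IH] /=; first by rewrite expr0 mule1.
have slice y : lebint (fun t : n.-tuple R => if cube a b (cons_tuple y t) then c else 0)
    = c * ((b - a) ^+ n)%:E * (\1_(`[a, b]%classic : set R) y)%:E.
  rewrite -IH indicE /cube /=; have [yab|yab] := boolP (a <= y <= b)%R.
    by rewrite mem_set ?mule1 //= in_itv /= yab.
  by rewrite memNset ?mule0 ?lebint0 //= in_itv /= (negbTE yab).
under eq_integral => y _ do rewrite slice.
rewrite ge0_integralZl//; first last.
- by apply: mule_ge0 => //; rewrite lee_fin exprn_ge0// subr_ge0.
- by apply/measurable_EFinP; apply: measurable_indic.
have leb_ab : lebesgue_measure (`[a, b]%classic : set R) = (b - a)%:E.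
  rewrite lebesgue_measure_itv /= lte_fin.
  by case: ltgtP ab => // -> _; rewrite subrr.
rewrite integral_indic// setIT.
by rewrite [X in _ * X = _]leb_ab -muleA -EFinM exprSr.
Qed.

End lebint.

Section enorm.
Context {R : realType} {d : nat}.
Implicit Types x y : d.-tuple R.

Definition sqnorm x := \sum_(i < d) tnth x i ^+ 2.

Lemma sqnorm_ge0 x : 0 <= sqnorm x.
Proof. by apply: sumr_ge0 => i _; exact: sqr_ge0. Qed.

Lemma enorm_sqr x : enorm x ^+ 2 = sqnorm x.
Proof. by rewrite sqr_sqrtr// sqnorm_ge0. Qed.

Lemma enorm_ge0 x : 0 <= enorm x.
Proof. exact: sqrtr_ge0. Qed.

Lemma enorm_le x t : 0 <= t -> sqnorm x <= t ^+ 2 -> enorm x <= t.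
Proof. by move=> t0 xt; rewrite -ler_sqr ?nnegrE ?enorm_ge0// enorm_sqr. Qed.

Lemma enorm_ge x t : 0 <= t -> t ^+ 2 <= sqnorm x -> t <= enorm x.
Proof. by move=> t0 tx; rewrite -ler_sqr ?nnegrE ?enorm_ge0// enorm_sqr. Qed.

Lemma measurable_enorm : measurable_fun setT (@enorm R d).
Proof.
apply: measurableT_comp (continuous_measurable_fun (@sqrt_continuous R)) _.
by apply: measurable_sum => i; apply: measurable_funX; exact: measurable_tnth.
Qed.

Lemma sqnorm_tsub_le x y : sqnorm (tsub x y) <= 2 * sqnorm x + 2 * sqnorm y.
Proof.
rewrite /sqnorm !mulr_sumr -big_split /=; apply: ler_sum => i _.
rewrite tnth_map tnth_ord_tuple; have := sqr_ge0 (tnth x i + tnth y i); nra.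
Qed.

Lemma enorm_tsub_le [x y m] : enorm x <= m -> enorm y <= m -> enorm (tsub x y) <= 2 * m.
Proof.
move=> xm ym; have m0 : 0 <= m := le_trans (enorm_ge0 x) xm.
apply: enorm_le; first by rewrite mulr_ge0.
rewrite -ler_sqr ?nnegrE ?enorm_ge0// enorm_sqr in xm.
rewrite -ler_sqr ?nnegrE ?enorm_ge0// enorm_sqr in ym.
by apply: le_trans (sqnorm_tsub_le x y) _; rewrite exprMn; lra.
Qed.

Lemma enorm_tsub_eq0 x y : enorm (tsub x y) = 0 -> x = y.
Proof.
move=> /eqP; rewrite sqrtr_eq0 => le0.
have /psumr_eq0P sq0 : sqnorm (tsub x y) = 0 by apply/eqP; rewrite eq_le le0 sqnorm_ge0.
apply: eq_from_tnth => i; apply/eqP; rewrite -subr_eq0 -sqrf_eq0.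
by have /(_ isT) := sq0 (fun i _ => sqr_ge0 _) i; rewrite tnth_map tnth_ord_tuple => ->.
Qed.

Lemma cube_enorm_le [a b : R] [x] : 0 <= a -> a <= b -> cube a b x -> enorm x <= d%:R * b.
Proof.
move=> a0 ab /allP xab; have b0 := le_trans a0 ab.
apply: enorm_le; first by rewrite mulr_ge0.
apply: (@le_trans _ _ (\sum_(i < d) b ^+ 2)).
  apply: ler_sum => i _; have /andP[ax xb] := xab _ (mem_tnth i x).
  by rewrite ler_sqr ?nnegrE//; exact: le_trans ax.
rewrite sumr_const card_ord -[_ *+ d]mulr_natl exprMn ler_wpM2r ?sqr_ge0//.
by rewrite -natrX ler_nat; case: d => // n; rewrite leq_pmulr.
Qed.

Lemma cube_enorm_ge [a b : R] [x] : (0 < d)%N -> 0 <= a -> cube a b x -> a <= enorm x.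
Proof.
move=> d0 a0 /allP xab; apply: enorm_ge => //; pose i0 : 'I_d := Ordinal d0.
rewrite /sqnorm (bigD1 i0)//=; have /andP[ax _] := xab _ (mem_tnth i0 x).
apply: ler_wpDr; first by apply: sumr_ge0 => i _; exact: sqr_ge0.
by rewrite ler_sqr ?nnegrE//; exact: le_trans ax.
Qed.

End enorm.

Section powR.
Context {R : realType}.

Lemma powR_mulr_exprn (r c s : R) k : 0 <= r -> 0 <= c ->
  (r * c ^+ k) `^ s = r `^ s * (c `^ s) ^+ k.
Proof.
move=> r0 c0; rewrite powRM ?exprn_ge0//; congr (_ * _).
rewrite -powR_mulrn// -powRrM mulrC powRrM powR_mulrn//; exact: powR_ge0.
Qed.

Lemma powR_invr (x s : R) : 0 <= x -> x^-1 `^ s = x `^ (- s).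
Proof. by move=> x0; rewrite -powR_inv1// -powRrM mulN1r. Qed.

Lemma powR_lt1 (x s : R) : 1 < x -> s < 0 -> x `^ s < 1.
Proof.
move=> x1 s0; rewrite lt_neqAle powR_eq1 negb_or (gt_eqF x1) lt_gtF ?(lt_trans ltr01)//=.
by rewrite (lt_eqF s0) -[leRHS](powRr0 x) ler_powR ?ltW.
Qed.

Lemma ler_wpdiv_powR [a e r s : R] : 0 <= a -> 0 <= s -> 0 < e -> e <= r ->
  a / r `^ s <= a / e `^ s.
Proof.
move=> a0 s0 e0 er; apply: ler_wpM2l => //.
have r0 : 0 < r := lt_le_trans e0 er.
rewrite lef_pV2 ?posrE ?powR_gt0//.
by apply: ge0_ler_powR; rewrite ?nnegrE ?(ltW e0) ?(ltW r0).
Qed.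

Lemma powR_le_dyadic (m z e : R) : 0 < m -> m <= z <= 2 * m ->
  z `^ e <= (1 + 2 `^ e) * m `^ e.
Proof.
move=> m0 /andP[mz z2m]; have z0 : 0 < z := lt_le_trans m0 mz.
rewrite mulrDl mul1r -powRM ?(ltW m0)//.
have [e0|e0] := leP 0 e.
  apply: (@le_trans _ _ ((2 * m) `^ e)); last by rewrite lerDr powR_ge0.
  by apply: ge0_ler_powR; rewrite ?nnegrE//; lra.
apply: (@le_trans _ _ (m `^ e)); last by rewrite lerDl powR_ge0.
have powR_oppK x : x `^ e = (x `^ (- e))^-1 by rewrite powRN invrK.
rewrite (powR_oppK z) (powR_oppK m) lef_pV2 ?posrE ?powR_gt0//.
by apply: ge0_ler_powR; rewrite ?nnegrE ?oppr_ge0 ?(ltW e0) ?(ltW m0) ?(ltW z0).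
Qed.

Lemma exists_lt_mulr_exp2 (r z : R) : 0 < r -> exists k, z < r * 2 ^+ k.
Proof.
move=> r0; exists (Num.Def.archi_bound (z / r)).
by rewrite mulrC -ltr_pdivrMr// upper_nthrootP.
Qed.

Lemma dyadic_shell_up [r z : R] : 0 < r -> r <= z ->
  exists k, r * 2 ^+ k <= z < 2 * (r * 2 ^+ k).
Proof.
move=> r0 rz; have [k zk] := exists_lt_mulr_exp2 r z r0.
have {k zk} ex : exists k, z < r * 2 ^+ k.+1.
  by exists k; apply: lt_le_trans zk _; rewrite ler_pM2l// ler_eXn2l// ?ltr1n.
case: (ex_minnP ex) => k zk kmin; exists k; rewrite mulrCA -exprS zk andbT.
case: k zk kmin => [|k] _ kmin; first by rewrite mulr1.
by rewrite leNgt; apply/negP => /kmin; rewrite ltnn.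
Qed.

Lemma dyadic_shell_down [r z : R] : 0 < z -> z < r ->
  exists k, r * 2^-1 ^+ k.+1 <= z < 2 * (r * 2^-1 ^+ k.+1).
Proof.
move=> z0 zr; have [k rk] := exists_lt_mulr_exp2 z r z0.
have {k rk} ex : exists k, r * 2^-1 ^+ k.+1 <= z.
  exists k; rewrite exprVn ler_pdivrMr ?exprn_gt0//; apply: ltW.
  by apply: lt_le_trans rk _; rewrite ler_pM2l// ler_eXn2l// ?ltr1n.
case: (ex_minnP ex) => k zk kmin; exists k.
rewrite zk /= exprS mulrCA [2 * _]mulrA divff ?mul1r//.
case: k zk kmin => [|k] _ kmin; first by rewrite mulr1.
by rewrite ltNge; apply/negP => /kmin; rewrite ltnn.
Qed.

End powR.

Lemma lee_fin_ub {R : realType} (X : \bar R) (B : R) : (0 <= X)%E ->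
  (forall w : R, 0 <= w -> (w%:E <= X)%E -> w <= B) -> (X <= B%:E)%E.
Proof.
case: X => [x| |] // X0 XB; first by rewrite lee_fin XB// -lee_fin.
exfalso; have := XB (`|B| + 1) (addr_ge0 (normr_ge0 B) ler01) (leey _).
by have := ler_norm B; lra.
Qed.

Section cube_bound.
Context {R : realType} {d : nat} {q : R} {F : d.-tuple R -> \bar R}.
Hypothesis q1 : 1 < q.
Local Notation Fq := (lebint (fun x => F x `^ q)%E).

Let q0 : 0 < q. Proof. exact: lt_trans ltr01 q1. Qed.

Let Fq_ge0 : (0 <= Fq)%E. Proof. by apply: lebint_ge0 => x; exact: poweR_ge0. Qed.

Lemma lebint_powe_ge_cube (a b v : R) : 0 <= a <= b -> 0 <= v ->
  (forall x, cube a b x -> (v%:E <= F x)%E) -> ((v `^ q * (b - a) ^+ d)%:E <= Fq)%E.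
Proof.
move=> /andP[a0 ab] v0 vF.
apply: (@le_trans _ _ (lebint (fun x => if cube a b x then (v `^ q)%:E else 0%E))).
  by rewrite lebint_cube// ?lee_fin ?powR_ge0// EFinM.
apply: le_lebint => x; first by case: ifP => // _; rewrite lee_fin powR_ge0.
case: ifP => xab; last exact: poweR_ge0.
have vFx := vF x xab; have Fx0 : (0 <= F x)%E by apply: le_trans vFx; rewrite lee_fin.
by rewrite -poweR_EFin gt0_ler_poweR ?(ltW q0) ?in_itv/= ?leey ?andbT ?lee_fin.
Qed.

Lemma le_of_cube_lower_bound [X : \bar R] [c a b p : R] : (0 <= X)%E -> 0 < c ->
  0 <= a < b -> Fq = p%:E -> (forall x, cube a b x -> (c%:E * X <= F x)%E) ->
  (X <= (c^-1 * p `^ q^-1 * (b - a) `^ (- (d%:R / q)))%:E)%E.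
Proof.
move=> X0 c0 /andP[a0 ab] Fp cXF; apply: lee_fin_ub => // w w0 wX.
have ba0 : 0 < b - a by rewrite subr_gt0.
have p0 : 0 <= p by rewrite -lee_fin -Fp.
have cw0 : 0 <= c * w by rewrite mulr_ge0// ltW.
have cwF x : cube a b x -> ((c * w)%:E <= F x)%E.
  by move=> xab; apply: le_trans (cXF x xab); rewrite EFinM lee_pmul2l ?lte_fin.
have := @lebint_powe_ge_cube a b (c * w); rewrite a0 (ltW ab) Fp => /(_ isT cw0 cwF).
rewrite lee_fin -ler_pdivlMr ?exprn_gt0// => cwq.
rewrite -mulrA ler_pdivlMl//.
have -> : c * w = ((c * w) `^ q) `^ q^-1 by rewrite -powRrM mulfV ?gt_eqF// powRr1.
have -> : (b - a) `^ (- (d%:R / q)) = (((b - a) ^+ d)^-1) `^ q^-1.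
  by rewrite powR_invr ?exprn_ge0 ?(ltW ba0)// -powR_mulrn ?(ltW ba0)// -powRrM mulrN.
rewrite -powRM// ?invr_ge0 ?exprn_ge0 ?(ltW ba0)//.
have pba0 : 0 <= p / (b - a) ^+ d by rewrite divr_ge0 ?exprn_ge0 ?(ltW ba0).
by apply: ge0_ler_powR; rewrite ?nnegrE ?invr_ge0 ?(ltW q0) ?powR_ge0.
Qed.

Lemma le_Lqnorm (X : \bar R) (K : R) : 0 < K ->
  (forall p, Fq = p%:E -> (X <= (K * p `^ q^-1)%:E)%E) -> (X <= K%:E * Lqnorm q F)%E.
Proof.
rewrite /Lqnorm => K0 XK; case Fp : Fq => [p| |].
- by rewrite poweR_EFin -EFinM XK.
- by rewrite /= invr_eq0 (gt_eqF q0) gt0_muley ?lte_fin// leey.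
- by have := Fq_ge0; rewrite Fp.
Qed.

End cube_bound.

Section geometric.
Context {R : realType}.
Local Open Scope ereal_scope.

Lemma nneseries_geometric_le (A rho : R) : (0 <= A)%R -> (0 < rho < 1)%R ->
  \sum_(k <oo) (A * rho ^+ k)%:E <= (A / (1 - rho))%:E.
Proof.
move=> A0 /andP[rho0 rho1]; apply: lime_le.
  by apply: is_cvg_nneseries => k _; rewrite lee_fin mulr_ge0// exprn_ge0// ltW.
apply: nearW => n /=; rewrite sumEFin lee_fin.
have rho_norm : (`|rho| < 1)%R by rewrite ger0_norm// ltW.
by have := geometric_le_lim n A0 rho0 rho_norm; rewrite /series /= big_mkord.
Qed.

Lemma lebint_le_geometric n (f : n.-tuple R -> \bar R) (g : nat -> n.-tuple R -> \bar R)
    (A rho : R) : (0 <= A)%R -> (0 < rho < 1)%R ->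
  (forall k, measurable_fun setT (g k)) -> (forall k x, 0 <= g k x) ->
  (forall x, 0 <= f x) -> (forall x, exists k, f x <= g k x) ->
  (forall k, lebint (g k) <= (A * rho ^+ k)%:E) -> lebint f <= (A / (1 - rho))%:E.
Proof.
move=> A0 rho01 mg g0 f0 fg gA.
apply: (@le_trans _ _ (lebint (fun x => \sum_(k <oo) g k x))).
  apply: le_lebint => // x; have [k fgk] := fg x; apply: le_trans fgk _.
  by rewrite (@nneseriesD1 _ _ k)// leeDl// nneseries_ge0.
rewrite lebint_nneseries//.
apply: (@le_trans _ _ (\sum_(k <oo) (A * rho ^+ k)%:E)); last exact: nneseries_geometric_le.
by apply: lee_nneseries => [k _ _|k _]; [exact: lebint_ge0 | exact: gA].
Qed.

End geometric.

Definition far_const {R : realType} (d : nat) (q alpha delta : R) : R :=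
  (1 + 2 `^ (d%:R / q - delta)) * 2 `^ alpha * (2 * d%:R) `^ (d%:R / q)
  / (1 - 2 `^ (- delta)).

Definition near_const {R : realType} (d : nat) (q alpha delta : R) : R :=
  (1 + 2 `^ (delta + d%:R / q - alpha)) * (4 * d%:R) `^ alpha * 2 `^ (alpha - d%:R / q)
  * 2 `^ (- delta) / (1 - 2 `^ (- delta)).

Section riesz.
Context {R : realType} {d : nat} {q alpha delta : R} {u : d.-tuple R -> R}.
Hypotheses (d1 : (1 <= d)%N) (q1 : 1 < q) (alpha0 : 0 < alpha) (delta0 : 0 < delta)
  (mu : measurable_fun setT u).
Local Notation I := (riesz_conv alpha u).
Local Notation D := (d%:R / q).

Definition far_part (t : R) (y : d.-tuple R) : \bar R :=
  (if t <= enorm y then `|u y| / enorm y `^ alpha else 0)%:E.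

Definition near_part (t : R) (y : d.-tuple R) : \bar R :=
  (if enorm y < t then `|u y| else 0)%:E.

Lemma far_part_ge0 t y : (0 <= far_part t y)%E.
Proof. by rewrite lee_fin; case: ifP => // _; rewrite divr_ge0 ?powR_ge0. Qed.

Lemma near_part_ge0 t y : (0 <= near_part t y)%E.
Proof. by rewrite lee_fin; case: ifP. Qed.

Lemma measurable_far_part t : measurable_fun setT (far_part t).
Proof.
apply/measurable_EFinP; apply: measurable_fun_ifT.
- by apply: measurable_fun_ler => //; exact: measurable_enorm.
- under eq_fun do rewrite -powRN.
  apply: measurable_funM; first exact: measurableT_comp (@normr_measurable R setT) mu.
  exact: measurableT_comp (measurable_powR _) measurable_enorm.
- exact: measurable_cst.
Qed.

Lemma measurable_near_part t : measurable_fun setT (near_part t).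
Proof.
apply/measurable_EFinP; apply: measurable_fun_ifT.
- by apply: measurable_fun_ltr => //; exact: measurable_enorm.
- exact: measurableT_comp (@normr_measurable R setT) mu.
- exact: measurable_cst.
Qed.

Lemma riesz_conv_ge_far t x : 0 < t -> cube 0 (t / (2 * d%:R)) x ->
  ((2 `^ (- alpha))%:E * lebint (far_part t) <= I x)%E.
Proof.
move=> t0 xcube; have d0 : 0 < d%:R :> R by rewrite ltr0n.
have x_le : enorm x <= t / 2.
  have s0 : 0 <= t / (2 * d%:R) by rewrite divr_ge0// ltW// mulr_gt0.
  have := cube_enorm_le (lexx 0) s0 xcube.
  by rewrite [X in _ <= X -> _](_ : _ = t / 2)//; field; rewrite gt_eqF.
rewrite -lebintZl ?lee_fin ?powR_ge0//; [|exact: measurable_far_part|exact: far_part_ge0].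
apply: le_lebint => y; first exact: mule_ge0 (lee_tofin (powR_ge0 _ _)) (far_part_ge0 _ _).
rewrite /far_part; case: ifPn => ty; last first.
  by rewrite mule0 lee_fin divr_ge0 ?powR_ge0.
have xy_le : enorm (tsub x y) <= 2 * enorm y by apply: enorm_tsub_le; lra.
have xy_gt0 : 0 < enorm (tsub x y).
  rewrite lt_neqAle enorm_ge0 andbT eq_sym; apply/eqP => /enorm_tsub_eq0 xy.
  by move: x_le; rewrite xy; lra.
rewrite -EFinM lee_fin.
apply: le_trans _ (ler_wpdiv_powR (normr_ge0 _) (ltW alpha0) xy_gt0 xy_le).
by rewrite powRM ?enorm_ge0// powRN invfM mulrCA.
Qed.

Lemma riesz_conv_ge_near t x : 0 < t -> cube t (2 * t) x ->
  (((4 * d%:R * t) `^ (- alpha))%:E * lebint (near_part t) <= I x)%E.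
Proof.
move=> t0 xcube; have d0 : 1 <= d%:R :> R by rewrite ler1n.
have t_le_x := cube_enorm_ge d1 (ltW t0) xcube.
have x_le : enorm x <= d%:R * (2 * t) by apply: cube_enorm_le xcube; lra.
rewrite -lebintZl ?lee_fin ?powR_ge0//; [|exact: measurable_near_part|exact: near_part_ge0].
apply: le_lebint => y; first exact: mule_ge0 (lee_tofin (powR_ge0 _ _)) (near_part_ge0 _ _).
rewrite /near_part; case: ifPn => yt; last first.
  by rewrite mule0 lee_fin divr_ge0 ?powR_ge0.
have xy_le : enorm (tsub x y) <= 4 * d%:R * t.
  by apply: le_trans (enorm_tsub_le (lexx _) _) _; nra.
have xy_gt0 : 0 < enorm (tsub x y).
  rewrite lt_neqAle enorm_ge0 andbT eq_sym; apply/eqP => /enorm_tsub_eq0 xy.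
  by move: t_le_x; rewrite xy; lra.
rewrite -EFinM lee_fin.
apply: le_trans _ (ler_wpdiv_powR (normr_ge0 _) (ltW alpha0) xy_gt0 xy_le).
by rewrite powRN mulrC.
Qed.

Lemma lebint_far_part_le [p t] : lebint (fun x => I x `^ q)%E = p%:E -> 0 < t ->
  (lebint (far_part t) <= (2 `^ alpha * (2 * d%:R) `^ D * p `^ q^-1 * t `^ (- D))%:E)%E.
Proof.
move=> Ip t0; have d0 : 0 < 2 * d%:R :> R by rewrite mulr_gt0// ltr0n.
have s0 : 0 < t / (2 * d%:R) by rewrite divr_gt0.
have := le_of_cube_lower_bound q1 (lebint_ge0 (far_part_ge0 t))
  (powR_gt0 (- alpha) (ltr0n _ 2)) _ Ip (fun x => riesz_conv_ge_far t x t0).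
rewrite lexx s0 => /(_ isT) /le_trans; apply; rewrite lee_fin subr0 -powRN opprK.
rewrite [(t / _) `^ _]powRM ?(ltW t0) ?invr_ge0 ?(ltW d0)// powR_invr ?(ltW d0)// opprK.
by rewrite le_eqVlt; apply: predU1l; ring.
Qed.

Lemma lebint_near_part_le [p t] : lebint (fun x => I x `^ q)%E = p%:E -> 0 < t ->
  (lebint (near_part t) <= ((4 * d%:R) `^ alpha * p `^ q^-1 * t `^ (alpha - D))%:E)%E.
Proof.
move=> Ip t0; have d0 : 0 < 4 * d%:R :> R by rewrite mulr_gt0// ltr0n.
have := le_of_cube_lower_bound q1 (lebint_ge0 (near_part_ge0 t))
  (powR_gt0 (- alpha) (mulr_gt0 d0 t0)) _ Ip (fun x => riesz_conv_ge_near t x t0).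
rewrite (ltW t0) ltr_pMl// ltr1n => /(_ isT) /le_trans; apply.
rewrite lee_fin -powRN opprK (_ : 2 * t - t = t); last lra.
rewrite [(_ * t) `^ _]powRM ?(ltW t0) ?(ltW d0)// powRD ?(gt_eqF t0) ?implybT//.
by rewrite le_eqVlt; apply: predU1l; ring.
Qed.

Let rho01 : 0 < 2 `^ (- delta) < 1.
Proof. by rewrite powR_gt0 ?powR_lt1 ?ltr1n ?oppr_lt0. Qed.

Lemma far_const_gt0 : 0 < far_const d q alpha delta.
Proof.
have [_ rho1] := andP rho01.
have c0 : 0 < 1 + 2 `^ (D - delta) by rewrite ltr_pwDl ?powR_ge0.
by rewrite divr_gt0 ?subr_gt0// !mulr_gt0 ?powR_gt0 ?mulr_gt0 ?ltr0n.
Qed.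

Lemma near_const_ge0 : 0 <= near_const d q alpha delta.
Proof.
have [_ rho1] := andP rho01.
apply: divr_ge0; last by rewrite subr_ge0 ltW.
by rewrite !mulr_ge0 ?powR_ge0 ?addr_ge0 ?mulr_ge0.
Qed.

Lemma far_shell_le r y : 0 < r -> r <= enorm y -> exists k,
  ((`|u y| / enorm y `^ (alpha - D + delta))%:E
   <= ((1 + 2 `^ (D - delta)) * (r * 2 ^+ k) `^ (D - delta))%:E
      * far_part (r * 2 ^+ k) y)%E.
Proof.
move=> r0 ry; have [k /andP[mk mk2]] := dyadic_shell_up r0 ry.
exists k; rewrite /far_part mk -EFinM lee_fin.
have y0 : 0 < enorm y := lt_le_trans (mulr_gt0 r0 (exprn_gt0 k (ltr0n _ 2))) mk.
have -> : `|u y| / enorm y `^ (alpha - D + delta)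
    = enorm y `^ (D - delta) * (`|u y| / enorm y `^ alpha).
  rewrite (_ : alpha - D + delta = alpha + - (D - delta)); last by ring.
  by rewrite powRD ?(gt_eqF y0) ?implybT// powRN invfM invrK; ring.
by rewrite ler_wpM2r ?divr_ge0 ?powR_ge0// powR_le_dyadic ?mk ?ltW ?mulr_gt0 ?exprn_gt0.
Qed.

Lemma near_shell_le r y : 0 < r -> enorm y < r -> exists k,
  ((`|u y| / enorm y `^ (alpha - D - delta))%:E
   <= ((1 + 2 `^ (delta + D - alpha)) * (r * 2^-1 ^+ k.+1) `^ (delta + D - alpha))%:E
      * near_part (2 * (r * 2^-1 ^+ k.+1)) y)%E.
Proof.
move=> r0 yr; set e := delta + D - alpha.
have m0 k : 0 < r * 2^-1 ^+ k by rewrite mulr_gt0 ?exprn_gt0.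
have [y0|y0] := eqVneq (enorm y) 0.
  (* Here |y|^s is 1 if s = 0 and 0 otherwise, and x / 0 = 0. *)
  exists 0%N; rewrite /near_part y0 mulr_gt0 ?m0// -EFinM lee_fin.
  have [ga0|ga0] := eqVneq (alpha - D - delta) 0; last first.
    by rewrite powR0// invr0 mulr0 !mulr_ge0 ?powR_ge0// addr_ge0 ?powR_ge0.
  have -> : e = 0 by rewrite /e; lra.
  by rewrite ga0 !powRr0 divr1 mulr1 mulrDl mul1r lerDl.
have y_gt0 : 0 < enorm y by rewrite lt0r y0 enorm_ge0.
have [k /andP[mk mk2]] := dyadic_shell_down y_gt0 yr.
exists k; rewrite /near_part mk2 -EFinM lee_fin mulrC -powRN.
rewrite (_ : - (alpha - D - delta) = e); last by rewrite /e; ring.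
by rewrite ler_wpM2r// powR_le_dyadic ?m0// mk ltW.
Qed.

Lemma far_estimate [p r] : lebint (fun x => I x `^ q)%E = p%:E -> 0 < r ->
  (lebint (fun x => (if r <= enorm x then `|u x| / enorm x `^ (alpha - D + delta)
                     else 0)%:E)
   <= (far_const d q alpha delta / r `^ delta * p `^ q^-1)%:E)%E.
Proof.
move=> Ip r0.
set c := 1 + 2 `^ (D - delta).
have c0 : 0 <= c by rewrite addr_ge0 ?powR_ge0.
set K := c * (2 `^ alpha * (2 * d%:R) `^ D * p `^ q^-1).
have K0 : 0 <= K by rewrite !mulr_ge0 ?powR_ge0.
pose m k := r * 2 ^+ k.
have m0 k : 0 < m k by rewrite mulr_gt0 ?exprn_gt0.
pose g k y := ((c * m k `^ (D - delta))%:E * far_part (m k) y)%E.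
have g0 k y : (0 <= g k y)%E.
  exact: mule_ge0 (lee_tofin (mulr_ge0 c0 (powR_ge0 _ _))) (far_part_ge0 _ _).
apply: le_trans (@lebint_le_geometric _ _ _ g (K * r `^ (- delta)) _ _ rho01 _ g0 _ _ _) _.
- by rewrite mulr_ge0 ?powR_ge0.
- by move=> k; apply: measurable_funeM; exact: measurable_far_part.
- by move=> x; case: ifP; rewrite lee_fin// => _; rewrite divr_ge0 ?powR_ge0.
- move=> y; case: ifPn => ry; last by exists 0%N; exact: g0.
  exact: far_shell_le.
- move=> k; rewrite /g lebintZl ?lee_fin ?mulr_ge0 ?powR_ge0//; last first.
  + exact: far_part_ge0.
  + exact: measurable_far_part.
  have c_ge0 := lee_tofin (mulr_ge0 c0 (powR_ge0 (m k) (D - delta))).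
  apply: le_trans (lee_wpmul2l c_ge0 (lebint_far_part_le Ip (m0 k))) _.
  have mE : m k `^ (D - delta) * m k `^ (- D) = r `^ (- delta) * 2 `^ (- delta) ^+ k.
    rewrite -powRD ?(gt_eqF (m0 k)) ?implybT// powR_mulr_exprn ?(ltW r0)//.
    by rewrite (_ : D - delta - D = - delta)//; ring.
  rewrite -EFinM lee_fin le_eqVlt; apply: predU1l.
  by rewrite -[RHS]mulrA -mE /K; ring.
by rewrite lee_fin le_eqVlt; apply: predU1l; rewrite /K /c /far_const powRN; ring.
Qed.

Lemma near_estimate [p r] : lebint (fun x => I x `^ q)%E = p%:E -> 0 < r ->
  (lebint (fun x => (if enorm x < r then `|u x| / enorm x `^ (alpha - D - delta)
                     else 0)%:E)
   <= (near_const d q alpha delta * r `^ delta * p `^ q^-1)%:E)%E.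
Proof.
move=> Ip r0.
set e := delta + D - alpha; set c := 1 + 2 `^ e.
have c0 : 0 <= c by rewrite addr_ge0 ?powR_ge0.
set K := c * (4 * d%:R) `^ alpha * 2 `^ (alpha - D) * 2 `^ (- delta) * p `^ q^-1.
have K0 : 0 <= K by rewrite !mulr_ge0 ?powR_ge0.
pose m k := r * 2^-1 ^+ k.+1.
have m0 k : 0 < m k by rewrite mulr_gt0 ?exprn_gt0.
pose g k y := ((c * m k `^ e)%:E * near_part (2 * m k) y)%E.
have g0 k y : (0 <= g k y)%E.
  exact: mule_ge0 (lee_tofin (mulr_ge0 c0 (powR_ge0 _ _))) (near_part_ge0 _ _).
apply: le_trans (@lebint_le_geometric _ _ _ g (K * r `^ delta) _ _ rho01 _ g0 _ _ _) _.
- by rewrite mulr_ge0 ?powR_ge0.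
- by move=> k; apply: measurable_funeM; exact: measurable_near_part.
- by move=> x; case: ifP; rewrite lee_fin// => _; rewrite divr_ge0 ?powR_ge0.
- move=> y; case: ifPn => yr; last by exists 0%N; exact: g0.
  exact: near_shell_le.
- move=> k; rewrite /g lebintZl ?lee_fin ?mulr_ge0 ?powR_ge0//; last first.
  + exact: near_part_ge0.
  + exact: measurable_near_part.
  have c_ge0 := lee_tofin (mulr_ge0 c0 (powR_ge0 (m k) e)).
  have m2_gt0 : 0 < 2 * m k by rewrite mulr_gt0.
  apply: le_trans (lee_wpmul2l c_ge0 (lebint_near_part_le Ip m2_gt0)) _.
  have mE : m k `^ e * m k `^ (alpha - D)
      = r `^ delta * 2 `^ (- delta) * 2 `^ (- delta) ^+ k.
    rewrite -powRD ?(gt_eqF (m0 k)) ?implybT// powR_mulr_exprn ?(ltW r0)//.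
    by rewrite powR_invr// exprS (_ : e + (alpha - D) = delta) ?mulrA// /e; ring.
  rewrite -EFinM lee_fin le_eqVlt; apply: predU1l.
  rewrite [(2 * _) `^ _]powRM ?(ltW (m0 k))//.
  transitivity (c * (4 * d%:R) `^ alpha * 2 `^ (alpha - D) * p `^ q^-1
                * (m k `^ e * m k `^ (alpha - D))); first by ring.
  by rewrite mE /K; ring.
by rewrite lee_fin le_eqVlt; apply: predU1l; rewrite /K /c /e /near_const; ring.
Qed.

End riesz.

Theorem proposition2p2 (R : realType) (d : nat) (q alpha delta : R) :
  (1 <= d)%N -> 1 < q -> d%:R / q < alpha -> alpha < d%:R -> 0 < delta ->
  exists C : R, 0 < C /\
    forall (r : R) (u : d.-tuple R -> R), 0 < r -> measurable_fun setT u ->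
      (lebint (fun x => (if r <= enorm x
                         then `|u x| / (enorm x `^ (alpha - d%:R / q + delta))
                         else 0)%:E)
         <= (C / r `^ delta)%:E * Lqnorm q (riesz_conv alpha u))%E /\
      (lebint (fun x => (if enorm x < r
                         then `|u x| / (enorm x `^ (alpha - d%:R / q - delta))
                         else 0)%:E)
         <= (C * r `^ delta)%:E * Lqnorm q (riesz_conv alpha u))%E.
Proof.
move=> d1 q1 dq_alpha _ delta0.
have alpha0 : 0 < alpha.
  by apply: le_lt_trans dq_alpha; rewrite divr_ge0 ?ler0n// ltW// (lt_trans ltr01).
have Cf_gt0 := far_const_gt0 (q := q) (alpha := alpha) d1 delta0.
have Cn_ge0 := near_const_ge0 (q := q) (alpha := alpha) delta0.
exists (far_const d q alpha delta + near_const d q alpha delta).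
split=> [|r u r0 mu]; first by rewrite ltr_wpDr.
have rdelta0 : 0 < r `^ delta by rewrite powR_gt0.
split; apply: (le_Lqnorm q1) => [|p Ip].
- by rewrite divr_gt0// ltr_wpDr.
- apply: le_trans (far_estimate d1 q1 alpha0 delta0 mu Ip r0) _.
  rewrite lee_fin; apply: ler_wpM2r; first exact: powR_ge0.
  by apply: ler_wpM2r; rewrite ?invr_ge0 ?(ltW rdelta0) ?lerDl.
- by rewrite mulr_gt0// ltr_wpDr.
- apply: le_trans (near_estimate d1 q1 alpha0 delta0 mu Ip r0) _.
  rewrite lee_fin; apply: ler_wpM2r; first exact: powR_ge0.
  by apply: ler_wpM2r; rewrite ?(ltW rdelta0) ?lerDr ?(ltW Cf_gt0).
Qed.
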